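(* Let $m\ge 1$, let $y_1,\dots,y_m$ be distinct integers each less than $-1$, and let $D=\{1,y_1,\dots,y_m\}$. If $(T,s)$ is a signed tree that realizes $D$, then $diam(T)\ge 4$ if $m=1$, $diam(T)\ge 5$ if $m=2$, and $diam(T)\ge 6$ if $m>2$.
   Context: A signed tree is a pair $(T,s)$ where $T$ is a finite tree and $s:E(T)\to\{+,-\}$. The signed degree $sdeg(v)$ of a vertex is the number of incident positive edges minus the number of incident negative edges. $(T,s)$ realizes $D$ if $D=\{sdeg(v):v\in V(T)\}$. $diam(T)$ denotes the diameter of $T$. *)

From mathcomp Require Import all_boot all_order all_algebra.
Set Implicit Arguments. Unset Strict Implicit. Unset Printing Implicit Defensive.
Import Order.TTheory GRing.Theory Num.Theory.

Definition simple_graph (V : finType) (e : rel V) : Prop :=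
  symmetric e /\ irreflexive e.

Definition connected_graph (V : finType) (e : rel V) : Prop :=
  forall x y : V, connect e x y.

Definition acyclic_graph (V : finType) (e : rel V) : Prop :=
  forall c : seq V, ucycle e c -> size c < 3.

Definition is_tree (V : finType) (e : rel V) : Prop :=
  0 < #|V| /\ simple_graph e /\ connected_graph e /\ acyclic_graph e.

(* A sign assignment s on the edges: the edge {x,y} is positive iff s [set x; y]
   (values of s on non-edges are irrelevant). *)
Definition sdeg (V : finType) (e : rel V) (s : {set V} -> bool) (v : V) : int :=
  (#|[set u | e v u && s [set v; u]]|%:Z - #|[set u | e v u && ~~ s [set v; u]]|%:Z)%R.

Definition realizes (V : finType) (e : rel V) (s : {set V} -> bool) (D : seq int) : Prop :=
  forall z : int, (exists v : V, sdeg e s v = z) <-> z \in D.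

(* distance: least n such that a walk of length n joins x to y
   (searched among 0..#|V|-1, enough for connected graphs) *)
Definition dist (V : finType) (e : rel V) (x y : V) : nat :=
  find (fun n => [exists p : n.-tuple V, path e x p && (last x p == y)])
       (iota 0 #|V|).

Definition diam (V : finType) (e : rel V) : nat :=
  \max_(x : V) \max_(y : V) dist e x y.

(* A vertex of signed degree y < -1 has at least two negative edges, and the
   neighbour u across a negative edge cannot be a leaf, for then sdeg u = -1,
   which is not in D. So each vertex realizing some y_i has two long branches:
   two distinct neighbours, each with a further neighbour. A path between two
   such vertices (possibly equal) therefore extends by two edges at each end.
   In a tree a path without repeated vertices is a shortest walk, so its length
   bounds the diameter: 4 for one vertex, 5 for two distinct ones, and 6 for
   three, as three vertices of a tree are never pairwise adjacent. *)

From mathcomp Require Import all_boot all_order all_algebra.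
From mathcomp Require Import zify.
Set Implicit Arguments. Unset Strict Implicit. Unset Printing Implicit Defensive.
Import Order.TTheory GRing.Theory Num.Theory.

Definition deledge (V : finType) (e : rel V) (E : {set V}) : rel V :=
  fun a b => e a b && ([set a; b] != E).

Lemma lipschitz_last (V : Type) (e : rel V) (f : V -> nat) :
    (forall a b, e a b -> f b <= (f a).+1) ->
  forall z q, path e z q -> f (last z q) <= f z + size q.
Proof.
move=> f_lip z q; elim: q z => [|a q IHq] z /=; first by rewrite addn0.
by case/andP=> /f_lip za /IHq; lia.
Qed.

Lemma sum_eq_inj_le1 (T : eqType) n (g : 'I_n -> T) (X : T) :
  injective g -> \sum_(i < n) (g i == X : nat) <= 1.
Proof.
move=> g_inj; rewrite -big_mkcond sum1_card /=.
by apply/card_le1_eqP => i j /eqP <- /eqP /g_inj.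
Qed.

Lemma dist_le_diam (V : finType) (e : rel V) x y : dist e x y <= diam e.
Proof.
apply: leq_trans (leq_bigmax x).
exact: (leq_bigmax (F := fun y => dist e x y) y).
Qed.

Definition long_branch (V : finType) (e : rel V) (v u : V) : bool :=
  e v u && [exists w, e u w && (w != v)].

Definition two_long_branches (V : finType) (e : rel V) (v : V) : Prop :=
  exists u1 u2, [/\ u1 != u2, long_branch e v u1 & long_branch e v u2].

Section Acyclic.
Variables (V : finType) (e : rel V).
Hypotheses (e_sym : symmetric e) (e_irr : irreflexive e) (e_acyc : acyclic_graph e).

Lemma deledge_sym E : symmetric (deledge e E).
Proof. by move=> a b; rewrite /deledge e_sym setUC. Qed.

Lemma closing_upath_size u p :
  uniq (u :: p) -> path e u p -> e (last u p) u -> size p <= 1.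
Proof.
move=> up pp pu; apply: (e_acyc (c := u :: p)).
by rewrite /ucycle /= rcons_path pp pu -/(uniq (u :: p)) up.
Qed.

Lemma deledge_disconnects u w : e u w -> ~~ connect (deledge e [set u; w]) u w.
Proof.
move=> uw; apply/negP=> /connectP [p0 pp0]; case: (shortenP pp0) => p pp up _ w_last.
rewrite {}w_last in uw pp.
have pe : path e u p by apply: sub_path pp => a b /andP [].
have := closing_upath_size up pe; rewrite e_sym uw => /(_ isT).
case: p uw pp {up pe} => [|a [|]] //= uw; first by rewrite e_irr in uw.
by rewrite /deledge eqxx !andbF.
Qed.

Section Geodesic.
Variables (x : V) (p : seq V).
Hypotheses (up : uniq (x :: p)) (pp : path e x p).

Let c := x :: p.
Let cut i := [set nth x c i; nth x c i.+1].

Lemma cut_inj i j : i < size p -> j < size p -> cut i = cut j -> i = j.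
Proof.
have nth_inj k l : nth x c k = nth x c l -> k <= size p -> l <= size p -> k = l.
  by move=> ckl kp lp; apply/eqP; rewrite -(nth_uniq x _ _ up) ?ckl.
move=> ip jp /setP E; have /esym := E (nth x c i); have /esym := E (nth x c i.+1).
by rewrite !inE !eqxx ?orbT => /orP [] /eqP /nth_inj Ei1 /orP [] /eqP /nth_inj Ei; lia.
Qed.

Lemma connect_along i j k : i < size p -> j <= k <= size p -> (k <= i) || (i < j) ->
  connect (deledge e (cut i)) (nth x c j) (nth x c k).
Proof.
move=> ip; elim: k => [|k IHk] /andP [jk kp] away.
  by rewrite leqn0 in jk; rewrite (eqP jk).
case: (eqVneq j k.+1) => [-> //|jk1].
apply: connect_trans (IHk _ _) (connect1 _); [lia | lia |].
rewrite /deledge (pathP x pp) //; apply/eqP => /(cut_inj kp ip); lia.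
Qed.

(* [crossed z] counts the edges of the path that separate [z] from [x]; it
   grows by at most one along any edge, which makes the path a shortest walk. *)
Let beyond i z := connect (deledge e (cut i)) z (nth x c i.+1).
Let crossed z := \sum_(i < size p) (beyond i z : nat).

Lemma crossed_first : crossed x = 0.
Proof.
apply/eqP; rewrite sum_nat_eq0; apply/forallP=> -[i ip]; rewrite eqb0 /beyond /=.
apply: contra (deledge_disconnects (pathP x pp _ ip)) => beyond_x.
apply: connect_trans _ beyond_x.
rewrite (sym_connect_sym (@deledge_sym _)).
by apply: (@connect_along i 0 i); rewrite ?leqnn //= ltnW.
Qed.

Lemma crossed_last : crossed (last x p) = size p.
Proof.
rewrite -[RHS]card_ord -sum1_card; apply: eq_bigr => -[i ip] _ /=.
rewrite /beyond (last_nth x) (sym_connect_sym (@deledge_sym _)).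
by rewrite (@connect_along i i.+1 (size p)) ?ip ?leqnn ?ltnSn ?orbT.
Qed.

Lemma crossed_step a b : e a b -> crossed b <= (crossed a).+1.
Proof.
move=> ab.
have side i : (beyond i b : nat) <= beyond i a + (cut i == [set a; b]).
  have [_|ncut] := eqVneq (cut i) [set a; b]; first by case: (beyond i a); case: (beyond i b).
  case beyond_b: (beyond i b) => //=.
  by rewrite /beyond (connect_trans (connect1 _) beyond_b) // /deledge ab eq_sym.
rewrite /crossed (leq_trans (leq_sum _ (fun (i : 'I_(size p)) _ => side i))) // big_split /=.
rewrite -addn1 leq_add2l.
by apply: sum_eq_inj_le1 => i j /cut_inj; move/(_ (ltn_ord i) (ltn_ord j))/val_inj.
Qed.

Lemma upath_shortest q : path e x q -> last x q = last x p -> size p <= size q.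
Proof.
move=> pq lq; have := lipschitz_last crossed_step pq.
by rewrite lq crossed_last crossed_first.
Qed.

End Geodesic.

Lemma upath_size_le_dist x r : uniq (x :: r) -> path e x r -> size r <= dist e x (last x r).
Proof.
move=> ur pr; have r_lt_V : size r < #|V|.
  by move/card_uniqP: ur => /= <-; apply: max_card.
rewrite /dist leqNgt; apply/negP=> short.
have /(ltn_trans short) : size r < size (iota 0 #|V|) by rewrite size_iota.
rewrite -has_find => hasP.
have := nth_find 0 hasP; rewrite nth_iota ?(ltn_trans short) // add0n.
case/existsP=> t /andP [pt /eqP lt].
by have := upath_shortest ur pr pt lt; rewrite size_tuple leqNgt short.
Qed.

Lemma upath_size_le_diam x r : uniq (x :: r) -> path e x r -> size r <= diam e.
Proof. by move=> ur pr; apply: leq_trans (upath_size_le_dist ur pr) (dist_le_diam _ _ _). Qed.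

Lemma upath_cons y z q :
  uniq (z :: q) -> path e z q -> e y z -> y != head z q -> uniq (y :: z :: q).
Proof.
move=> uq pq yz y_head; rewrite cons_uniq uq andbT in_cons negb_or.
have -> /= : y != z by apply: contraTneq yz => ->; rewrite e_irr.
apply/negP=> /splitPr q_split; case: q_split => q1 q2 in uq pq y_head *.
have u1 : uniq (z :: rcons q1 y).
  by move: uq; rewrite -cat_rcons -cat_cons cat_uniq => /andP [].
have p1 : path e z (rcons q1 y) by move: pq; rewrite -cat_rcons cat_path => /andP [].
have := closing_upath_size u1 p1; rewrite last_rcons yz size_rcons => /(_ isT).
by case: q1 {u1 p1 uq pq} y_head => //=; rewrite eqxx.
Qed.

Lemma long_branch_cons b q : two_long_branches e b -> uniq (b :: q) -> path e b q ->
  exists u w, uniq (w :: u :: b :: q) && path e w (u :: b :: q).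
Proof.
move=> [u1 [u2 [u12 b_u1 b_u2]]] ubq pbq.
suff ext u : long_branch e b u -> u != head b q ->
    exists u w, uniq (w :: u :: b :: q) && path e w (u :: b :: q).
  have [u1_head|] := eqVneq u1 (head b q); last exact: ext.
  by apply: ext b_u2 _; rewrite -u1_head eq_sym.
case/andP=> bu /existsP [w /andP [uw wb]] u_head; exists u, w.
have ub : e u b by rewrite e_sym.
have pu : path e u (b :: q) by rewrite /= ub.
rewrite (upath_cons (upath_cons ubq pbq ub u_head) pu) //=; last by rewrite e_sym.
by rewrite e_sym uw.
Qed.

Lemma sorted_rev c : sorted e c -> sorted e (rev c).
Proof. by move=> ec; rewrite rev_sorted; apply: sub_sorted ec => a b; rewrite e_sym. Qed.

Lemma long_branches_ends_diam a p :
    two_long_branches e a -> two_long_branches e (last a p) ->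
    uniq (a :: p) -> path e a p ->
  size p + 4 <= diam e.
Proof.
move=> la lb uap pap; have rev_ap : rev (a :: p) = last a p :: rev (belast a p).
  by rewrite [a :: p]lastI rev_rcons.
have [u [w /andP []]] :
    exists u w, uniq (w :: u :: rev (a :: p)) && sorted e (w :: u :: rev (a :: p)).
  rewrite rev_ap; apply: long_branch_cons lb _ _.
    by rewrite -rev_ap rev_uniq.
  by rewrite -[path _ _ _]/(sorted e (_ :: _)) -rev_ap sorted_rev.
rewrite -rev_uniq (rev_cons w) (rev_cons u) revK => ur.
move/sorted_rev; rewrite (rev_cons w) (rev_cons u) revK => pr.
have [u' [w' /andP [ur' pr']]] := long_branch_cons la ur pr.
by have := upath_size_le_diam ur' pr'; rewrite /= !size_rcons; lia.
Qed.

Lemma long_branches_pair_diam a b : connect e a b ->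
    two_long_branches e a -> two_long_branches e b ->
  (if a == b then 4 else if e a b then 5 else 6) <= diam e.
Proof.
move=> /connectP [p0 pp0 ->]; case: (shortenP pp0) => p pp up _ la lb.
apply: leq_trans (long_branches_ends_diam la lb up pp).
case: p pp up {pp0 lb} => [|c [|d p]] pp up /=; first by rewrite eqxx.
  by have /andP [ac _] := pp; rewrite ac; case: eqP.
by case: (_ == _); case: (e _ _) => //=; lia.
Qed.

Lemma long_branches_triple_diam a b c : connected_graph e -> uniq [:: a; b; c] ->
    two_long_branches e a -> two_long_branches e b -> two_long_branches e c ->
  6 <= diam e.
Proof.
move=> conn uabc la lb lc; have /and3P [ab ac bc] : [&& a != b, a != c & b != c].
  by move: uabc; rewrite /= !inE; case: (a == b); case: (a == c); case: (b == c).
have := long_branches_pair_diam (conn a b) la lb; rewrite (negbTE ab).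
case: ifP => [e_ab _|_ //]; have := long_branches_pair_diam (conn a c) la lc.
rewrite (negbTE ac); case: ifP => [e_ac _|_ //].
have upath_bac : uniq [:: b; a; c].
  by rewrite /= !inE eq_sym (negbTE ab) (negbTE bc) (negbTE ac).
apply: (long_branches_ends_diam (p := [:: a; c])) lb lc upath_bac _.
by rewrite /= e_sym e_ab e_ac.
Qed.

Lemma long_branches_diam vs : connected_graph e -> uniq vs ->
    {in vs, forall v, two_long_branches e v} -> 0 < size vs ->
  (if size vs == 1 then 4 else if size vs == 2 then 5 else 6) <= diam e.
Proof.
case: vs => [|a [|b [|c vs]]] // conn uvs long _ /=; have la := long a (mem_head _ _).
- by have := long_branches_pair_diam (connect0 e a) la la; rewrite eqxx.
- have /long lb : b \in [:: a; b] by rewrite !inE eqxx orbT.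
  have := long_branches_pair_diam (conn a b) la lb.
  move: uvs; rewrite /= inE andbT => /negbTE ->.
  by case: (e _ _) => // /ltnW.
- have /long lb : b \in [:: a, b, c & vs] by rewrite !inE eqxx orbT.
  have /long lc : c \in [:: a, b, c & vs] by rewrite !inE eqxx !orbT.
  move: uvs; rewrite -[_ :: _]/([:: a; b; c] ++ vs) cat_uniq => /andP [uabc _].
  exact: long_branches_triple_diam conn uabc la lb lc.
Qed.
End Acyclic.

Lemma map_preim_in (T U : eqType) (f : T -> U) (P : T -> Prop) ys :
    {in ys, forall y, exists2 x, f x = y & P x} ->
  exists2 xs, map f xs = ys & {in xs, forall x, P x}.
Proof.
elim: ys => [|y ys IHys] preim; first by exists [::].
have [x fx Px] := preim y (mem_head _ _).
have [|xs <- Pxs] := IHys; first by move=> z z_ys; apply: preim; rewrite inE z_ys orbT.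
by exists (x :: xs); [rewrite /= fx | move=> z /predU1P [->|/Pxs]].
Qed.

Lemma sdeg_leaf (V : finType) (e : rel V) (s : {set V} -> bool) u v :
  e u v -> (forall t, e u t -> t = v) -> sdeg e s u = (if s [set u; v] then 1 else -1)%R.
Proof.
move=> uv only_v.
have card_nbrs (P : pred V) : #|[set t | e u t && P t]| = P v.
  rewrite (_ : [set t | e u t && P t] = if P v then [set v] else set0) => [|].
    by case: (P v); rewrite ?cards1 ?cards0.
  apply/setP=> t; rewrite inE; case: (boolP (e u t)) => [/only_v -> | nut] /=.
    by case: (P v); rewrite ?inE ?eqxx.
  by case: (P v); rewrite ?inE //; case: eqP => // tv; rewrite tv uv in nut.
by rewrite /sdeg !card_nbrs; case: (s _).
Qed.

Lemma sdeg_lt_long_branches (V : finType) (e : rel V) (s : {set V} -> bool) v :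
    symmetric e -> (forall u, sdeg e s u != (-1)%R) -> (sdeg e s v < -1)%R ->
  two_long_branches e v.
Proof.
move=> e_sym no_m1; rewrite /sdeg; set neg := [set u | _ && ~~ _] => sv.
have /card_gt1P [u1 [u2 [u1_neg u2_neg u12]]] : 1 < #|neg|.
  by move: sv; case: #|neg| => [|[|n]] //; case: #|_|.
suff long u : u \in neg -> long_branch e v u by exists u1, u2; rewrite u12 !long.
rewrite inE /long_branch => /andP [vu neg_vu]; rewrite vu /=.
apply: contraT; rewrite negb_exists => /forallP only_v.
have leaf t : e u t -> t = v by move=> ut; apply/eqP; have := only_v t; rewrite ut negbK.
have uv : e u v by rewrite e_sym.
by have := no_m1 u; rewrite (sdeg_leaf s uv leaf) setUC (negbTE neg_vu).
Qed.

Theorem mainTheorem5 (V : finType) (e : rel V) (s : {set V} -> bool)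
    (m : nat) (ys : seq int) :
  (1 <= m)%N -> size ys = m -> uniq ys -> all (fun y : int => (y < -1)%R) ys ->
  is_tree e -> realizes e s (1%R :: ys) ->
  (if m == 1%N then 4 else if m == 2%N then 5 else 6) <= diam e.
Proof.
move=> m_ge1 size_ys uniq_ys ys_lt [_ [[e_sym e_irr] [conn acyc]]] real.
have no_m1 u : sdeg e s u != (-1)%R.
  apply/eqP=> su; have : (-1)%R \in 1%R :: ys by apply/real; exists u.
  by rewrite in_cons /= => /(allP ys_lt); rewrite ltxx.
have branches y : y \in ys -> exists2 v, sdeg e s v = y & two_long_branches e v.
  move=> y_ys; have [v sv] : exists v, sdeg e s v = y by apply/real; rewrite inE y_ys orbT.
  by exists v => //; apply: sdeg_lt_long_branches e_sym no_m1 _; rewrite sv (allP ys_lt).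
have [vs vs_ys vs_long] := map_preim_in branches; subst ys m.
rewrite size_map in m_ge1 *.
exact: (@long_branches_diam _ _ e_sym e_irr acyc vs conn (map_uniq uniq_ys) vs_long m_ge1).
Qed.
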